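(* Let $S=\mathbb{C}[x_{ij}: 1\le i\le 4,\ 1\le j\le 3]$ with the $\mathbb{Z}^3$ column grading, and let $\Delta\in S$ be homogeneous of column degree $(1,1,1)$. Suppose $\Delta=ab+cd$ where $a,c$ are linear forms and $b,d$ are quadratic forms (homogeneous in the standard grading). Then there exist $a',b',c',d'\in S$, each homogeneous in the column grading, with $a',c'$ linear and $b',d'$ quadratic in the standard grading, such that $\Delta=a'b'+c'd'$.
   Context: The column grading is the $\mathbb{Z}^3$-grading with $\deg x_{i1}=(1,0,0)$, $\deg x_{i2}=(0,1,0)$, $\deg x_{i3}=(0,0,1)$ for $1\le i\le 4$ (the variables are the entries of a generic $4\times 3$ matrix, graded by column). *)

From HB Require Import structures.
From mathcomp Require Import all_boot all_order all_algebra.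
From mathcomp Require Import reals.
From mathcomp Require Import complex.
From mathcomp Require Import mpoly.
Set Implicit Arguments. Unset Strict Implicit. Unset Printing Implicit Defensive.
Import Order.TTheory GRing.Theory Num.Theory.
Local Open Scope ring_scope.

(* The 12 variables are indexed by k : 'I_12, with
   k = 3 * i + j for row i < 4 and column j < 3; so the column of
   variable k is k %% 3. *)
Definition S (R : realType) := {mpoly R[i][12]}.

Definition col_of (k : 'I_12) : nat := k %% 3.

Definition coldeg (m : 'X_{1..12}) (j : 'I_3) : nat :=
  (\sum_(k < 12 | col_of k == j) m k)%N.

(* p is homogeneous of column degree d (the zero polynomial qualifies). *)
Definition colhomog_of (R : realType) (d : 'I_3 -> nat) (p : S R) : Prop :=
  forall m : 'X_{1..12}, m \in msupp p -> forall j : 'I_3, coldeg m j = d j.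

Definition colhomog (R : realType) (p : S R) : Prop :=
  exists d : 'I_3 -> nat, colhomog_of d p.

Definition deg111 : 'I_3 -> nat := fun _ => 1%N.

From HB Require Import structures.
From mathcomp Require Import all_boot all_order all_algebra.
From mathcomp Require Import reals complex mpoly.
From mathcomp Require Import ring zify.
Set Implicit Arguments. Unset Strict Implicit. Unset Printing Implicit Defensive.
Import Order.TTheory GRing.Theory Num.Theory.
Local Open Scope ring_scope.

(* Proof of Lemma 7.3.  Write F = C and identify a polynomial Delta of column
   degree (1,1,1) with the tensor T of its coefficients,
     Delta = sum_{i,j,k} T i j k x_{i0} x_{j1} x_{k2},
   so that evaluating Delta at the 4x3 matrix with columns u, v, w gives the
   trilinear form tri T u v w.  A linear form a restricts to
   alpha0.u + alpha1.v + alpha2.w, hence Delta = ab + cd says that tri T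
   vanishes on the common zeros of two linear forms (vanishes_on).  The heart of
   the proof is a statement of linear algebra over any field of characteristic
   not 2 (decomposable_of_vanishing): such a T is a sum of two "slot products"
   f(x_p) g(other two arguments).  After rotating the arguments and eliminating,
   T vanishes on ker l /\ ker l' in one argument, or on ker l x ker l' in two
   arguments (a polarization trick absorbs the remaining terms into a shift of
   one argument), and annihilator lemmas then give the decomposition.  Finally,
   each slot product is (linear form in column p) * (quadratic form in the other
   two columns), both homogeneous for the column grading. *)

Lemma sum_delta (K : nzRingType) n (G : 'I_n -> K) a :
  \sum_i G i * (i == a)%:R = G a.
Proof.
rewrite (bigD1 a) //= big1 => [|j /negbTE hj]; first by rewrite eqxx mulr1 addr0.
by rewrite hj mulr0.
Qed.

Section LinearForms.
Variables (F : fieldType) (n : nat).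
Implicit Types (l u x z phi : 'I_n -> F) (s : F).

Definition dot l u : F := \sum_i l i * u i.

Definition shift u s z : 'I_n -> F := fun i => u i + s * z i.
Definition scale s u : 'I_n -> F := fun i => s * u i.
Definition unitv (a : 'I_n) : 'I_n -> F := fun i => (i == a)%:R.

Lemma dotC l u : dot l u = dot u l.
Proof. by apply: eq_bigr => i _; rewrite mulrC. Qed.

Lemma dot_shiftr l u s z : dot l (shift u s z) = dot l u + s * dot l z.
Proof.
rewrite /dot mulr_sumr -big_split; apply: eq_bigr => i _ /=; rewrite /shift; ring.
Qed.

Lemma dot_shiftl l s l' u : dot (shift l s l') u = dot l u + s * dot l' u.
Proof. by rewrite dotC dot_shiftr !(dotC u). Qed.

Lemma dot_scale l s u : dot l (scale s u) = s * dot l u.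
Proof. by rewrite /dot mulr_sumr; apply: eq_bigr => i _; rewrite /scale; ring. Qed.

Lemma dot_unitv l a : dot l (unitv a) = l a.
Proof. exact: sum_delta. Qed.

Lemma dot_eq0 l u : (forall i, l i = 0) -> dot l u = 0.
Proof. by move=> l0; rewrite /dot big1 // => i _; rewrite l0 mul0r. Qed.

Lemma vector_cases l : (exists a, l a != 0) \/ (forall i, l i = 0).
Proof.
case: (pickP (fun a => l a != 0)) => [a la|l0]; first by left; exists a.
by right=> i; move: (l0 i) => /negbFE /eqP.
Qed.

Lemma annihilator1 l phi : (forall x, dot l x = 0 -> dot phi x = 0) ->
  exists c : F, forall i, phi i = c * l i.
Proof.
move=> H; have [[a la]|l0] := vector_cases l.
  exists (phi a / l a) => i.
  have := H (shift (unitv i) (- (l i / l a)) (unitv a)).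
  rewrite !dot_shiftr !dot_unitv mulNr divfK // subrr => /(_ erefl) h.
  have -> : phi i = phi i + - (l i / l a) * phi a + (l i / l a) * phi a by ring.
  by rewrite h; field.
exists 0 => i; rewrite mul0r -(dot_unitv phi i); exact/H/dot_eq0.
Qed.

(* A linear form vanishing on ker l /\ ker l' is a combination of l and l';
   we reduce to annihilator1 by eliminating a coordinate where l is nonzero. *)
Lemma annihilator2 l l' phi :
  (forall x, dot l x = 0 -> dot l' x = 0 -> dot phi x = 0) ->
  exists c : F * F, forall i, phi i = c.1 * l i + c.2 * l' i.
Proof.
move=> H; have [[a la]|l0] := vector_cases l; last first.
  have [c hc] := annihilator1 (fun x => H x (dot_eq0 x l0)).
  by exists (0, c) => i /=; rewrite hc mul0r add0r.
pose phi1 := shift phi (- (phi a / l a)) l.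
pose l1 := shift l' (- (l' a / l a)) l.
have H1 : forall x, dot l1 x = 0 -> dot phi1 x = 0.
  move=> x hx.
  have := H (shift x (- (dot l x / l a)) (unitv a)).
  rewrite !dot_shiftr !dot_unitv mulNr divfK // subrr => /(_ erefl).
  have -> : dot l' x + - (dot l x / l a) * l' a = 0.
    by rewrite -hx /l1 dot_shiftl; field.
  by move=> /(_ erefl) h; rewrite /phi1 dot_shiftl -h; field.
have [c hc] := annihilator1 H1.
exists (phi a / l a - c * (l' a / l a), c) => i /=.
have := hc i; rewrite /phi1 /l1 /shift => h.
have -> : phi i = (phi i + - (phi a / l a) * l i) + (phi a / l a) * l i by ring.
by rewrite h; ring.
Qed.

End LinearForms.
Arguments unitv {F n} a i.

Section TrilinearForms.
Variables (F : fieldType) (n : nat).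
Local Notation vec := ('I_n -> F).
Local Notation tensor := ('I_n -> 'I_n -> 'I_n -> F).
Implicit Types (T : tensor) (M : 'I_n -> 'I_n -> F) (u v w z l : vec) (s : F).

Definition tri T u v w : F := \sum_i \sum_j \sum_k T i j k * u i * v j * w k.

Definition bil M u v : F := dot (fun i => dot (M i) v) u.

Lemma tri_shift1 T u s z v w : tri T (shift u s z) v w = tri T u v w + s * tri T z v w.
Proof.
rewrite /tri mulr_sumr -big_split; apply: eq_bigr => i _ /=.
rewrite mulr_sumr -big_split; apply: eq_bigr => j _ /=.
by rewrite mulr_sumr -big_split; apply: eq_bigr => k _ /=; rewrite /shift; ring.
Qed.

Lemma tri_shift2 T u v s z w : tri T u (shift v s z) w = tri T u v w + s * tri T u z w.
Proof.
rewrite /tri mulr_sumr -big_split; apply: eq_bigr => i _ /=.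
rewrite mulr_sumr -big_split; apply: eq_bigr => j _ /=.
by rewrite mulr_sumr -big_split; apply: eq_bigr => k _ /=; rewrite /shift; ring.
Qed.

Lemma tri_scale2 T s u v w : tri T u (scale s v) w = s * tri T u v w.
Proof.
rewrite /tri mulr_sumr; apply: eq_bigr => i _; rewrite mulr_sumr.
by apply: eq_bigr => j _; rewrite mulr_sumr; apply: eq_bigr => k _; rewrite /scale; ring.
Qed.

Lemma tri_scale3 T s u v w : tri T u v (scale s w) = s * tri T u v w.
Proof.
rewrite /tri mulr_sumr; apply: eq_bigr => i _; rewrite mulr_sumr.
by apply: eq_bigr => j _; rewrite mulr_sumr; apply: eq_bigr => k _; rewrite /scale; ring.
Qed.

Lemma tri_unitv3 T u v k : tri T u v (unitv k) = bil (fun i j => T i j k) u v.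
Proof.
rewrite /tri /bil /dot; apply: eq_bigr => i _; rewrite mulr_suml.
by apply: eq_bigr => j _; rewrite sum_delta; ring.
Qed.

Lemma tri_unitv23 T u j k : tri T u (unitv j) (unitv k) = dot (fun i => T i j k) u.
Proof. by rewrite tri_unitv3; apply: eq_bigr => i _; rewrite dot_unitv. Qed.

Lemma tri_unitv T i j k : tri T (unitv i) (unitv j) (unitv k) = T i j k.
Proof. by rewrite tri_unitv23 dot_unitv. Qed.

Definition rot T : tensor := fun i j k => T k i j.

Lemma tri_rot T u v w : tri (rot T) v w u = tri T u v w.
Proof.
rewrite /tri /rot.
rewrite (eq_bigr (fun x => \sum_z \sum_y T z x y * v x * w y * u z)); last first.
  by move=> x _; rewrite exchange_big.
rewrite exchange_big; apply: eq_bigr => z _; apply: eq_bigr => x _.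
by apply: eq_bigr => y _; ring.
Qed.

Lemma bilinear_annihilator M l l' :
  (forall u v, dot l u = 0 -> dot l' v = 0 -> bil M u v = 0) ->
  exists g h : vec, forall i j, M i j = l i * g j + h i * l' j.
Proof.
move=> H.
have row_ann v : dot l' v = 0 -> exists c : F, forall i, dot (M i) v = c * l i.
  by move=> hv; apply: annihilator1 => u hu; exact: H.
have [[a la]|l0] := vector_cases l; last first.
  have: forall i, exists c : F, forall j, M i j = c * l' j.
    move=> i; apply: annihilator1 => v hv.
    by have [c ->] := row_ann v hv; rewrite l0 mulr0.
  case/fin_all_exists => h hh.
  by exists (fun _ => 0), h => i j; rewrite hh l0 mul0r add0r.
have: forall i, exists c : F, forall j, shift (M i) (- (l i / l a)) (M a) j = c * l' j.
  move=> i; apply: annihilator1 => v hv.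
  by have [c hc] := row_ann v hv; rewrite dot_shiftl !hc; field.
case/fin_all_exists => h hh.
exists (fun j => M a j / l a), h => i j.
by rewrite -hh /shift; field.
Qed.

Definition slot (p : nat) (f : vec) (g : 'I_n -> 'I_n -> F) : tensor :=
  fun i j k => match p with 0 => f i * g j k | 1 => f j * g i k | _ => f k * g i j end.

(* T is a sum of two slot products: the tensor version of Delta = a'b' + c'd'
   with column-homogeneous factors. *)
Definition decomposable T :=
  exists (p q : nat) f g f' g', [/\ (p < 3)%N, (q < 3)%N & forall i j k,
    T i j k = slot p f g i j k + slot q f' g' i j k].

Lemma slot_rot p f g : (p < 3)%N -> exists p' g', (p' < 3)%N /\
  forall i j k, slot p f g j k i = slot p' f g' i j k.
Proof.
case: p => [|[|[|p]]] // _.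
- by exists 1%N, (fun i k => g k i).
- by exists 2%N, (fun i j => g j i).
- by exists 0%N, g.
Qed.

Lemma decomposable_rot T : decomposable (rot T) -> decomposable T.
Proof.
case=> p [q [f [g [f' [g' [hp hq H]]]]]].
have [p1 [g1 [hp1 H1]]] := slot_rot f g hp.
have [q1 [g2 [hq1 H2]]] := slot_rot f' g' hq.
by exists p1, q1, f, g1, f', g2; split=> // i j k; rewrite -H1 -H2 -H.
Qed.

Lemma decomposable_of_vanish_uu T l l' :
  (forall u v w, dot l u = 0 -> dot l' u = 0 -> tri T u v w = 0) -> decomposable T.
Proof.
move=> H.
have: forall jk : 'I_n * 'I_n, exists c : F * F, forall i,
    T i jk.1 jk.2 = c.1 * l i + c.2 * l' i.
  by move=> [j k]; apply: annihilator2 => x hx hx'; rewrite -tri_unitv23; exact: H.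
case/fin_all_exists => G hG.
exists 0%N, 0%N, l, (fun j k => (G (j, k)).1), l', (fun j k => (G (j, k)).2).
by split=> // i j k /=; rewrite (hG (j, k)); ring.
Qed.

Lemma decomposable_of_vanish_uv T l l' :
  (forall u v w, dot l u = 0 -> dot l' v = 0 -> tri T u v w = 0) -> decomposable T.
Proof.
move=> H.
have: forall k, exists gh : vec * vec, forall i j, T i j k = l i * gh.1 j + gh.2 i * l' j.
  move=> k; suff [g [h hgh]] : exists g h : vec,
      forall i j, T i j k = l i * g j + h i * l' j by exists (g, h).
  apply: (bilinear_annihilator (M := fun i j => T i j k)) => u v hu hv.
  by rewrite -tri_unitv3; exact: H.
case/fin_all_exists => G hG.
exists 0%N, 1%N, l, (fun j k => (G k).1 j), l', (fun i k => (G k).2 i).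
by split=> // i j k /=; rewrite hG [l' j * _]mulrC.
Qed.

Lemma decomposable_of_vanish_uw T l l' :
  (forall u v w, dot l u = 0 -> dot l' w = 0 -> tri T u v w = 0) -> decomposable T.
Proof.
move=> H; apply: decomposable_rot; apply: decomposable_rot.
apply: (decomposable_of_vanish_uv (l := l') (l' := l)) => w u v hw hu.
by rewrite tri_rot tri_rot; exact: H.
Qed.

End TrilinearForms.

Section Decomposition.
Variables (F : fieldType) (n : nat).
Hypothesis two_neq0 : (2 : F) != 0.
Local Notation vec := ('I_n -> F).
Local Notation tensor := ('I_n -> 'I_n -> 'I_n -> F).
Implicit Types (T : tensor) (u v w z : vec).

Definition vanishes_on T (x0 x1 x2 y0 y1 y2 : vec) := forall u v w,
  dot x0 u + dot x1 v + dot x2 w = 0 -> dot y0 u + dot y1 v + dot y2 w = 0 ->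
  tri T u v w = 0.

(* Polarization: T(u + s z, s v, s w) = s^2 (T(u,v,w) + s T(z,v,w)), so its
   vanishing at the two scalars s = 1, 2 forces T(u,v,w) = 0. *)
Lemma tri_eq0_of_shift1 T u v w z :
  (forall s : F, s != 0 -> tri T (shift u s z) (scale s v) (scale s w) = 0) ->
  tri T u v w = 0.
Proof.
move=> H; have := H 1 (oner_neq0 _); have := H 2 two_neq0.
rewrite !tri_scale3 !tri_scale2 !tri_shift1 !mul1r => /eqP.
rewrite !mulf_eq0 (negbTE two_neq0) /= => /eqP h2 h1.
have -> : tri T u v w =
    2 * (tri T u v w + tri T z v w) - (tri T u v w + 2 * tri T z v w) by ring.
by rewrite h1 h2 mulr0 subr0.
Qed.

Lemma tri_eq0_of_shift2 T u v w z :
  (forall s : F, s != 0 -> tri T u (shift v s z) (scale s w) = 0) ->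
  tri T u v w = 0.
Proof.
move=> H; have := H 1 (oner_neq0 _); have := H 2 two_neq0.
rewrite !tri_scale3 !tri_shift2 !mul1r => /eqP.
rewrite !mulf_eq0 (negbTE two_neq0) /= => /eqP h2 h1.
have -> : tri T u v w =
    2 * (tri T u v w + tri T u z w) - (tri T u v w + 2 * tri T u z w) by ring.
by rewrite h1 h2 mulr0 subr0.
Qed.

Lemma vanishes_on_rot T x0 x1 x2 y0 y1 y2 : vanishes_on T x0 x1 x2 y0 y1 y2 ->
  vanishes_on (rot T) x1 x2 x0 y1 y2 y0.
Proof.
move=> H u v w h1 h2; rewrite tri_rot; apply: H.
  by rewrite -h1; ring.
by rewrite -h2; ring.
Qed.

Lemma vanishes_on_swap T x0 x1 x2 y0 y1 y2 : vanishes_on T x0 x1 x2 y0 y1 y2 ->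
  vanishes_on T y0 y1 y2 x0 x1 x2.
Proof. by move=> H u v w h1 h2; apply: H. Qed.

(* If x0 and y0 are independent (x0 a != 0 = y0 a, y0 b != 0), then T vanishes
   as soon as u lies in ker x0 /\ ker y0: pick z with x0.z = -(x1.v + x2.w) and
   y0.z = -(y1.v + y2.w); then (u + s z, s v, s w) is a common zero for all s. *)
Lemma vanish_on_u_kernels T x0 x1 x2 y0 y1 y2 a b :
  vanishes_on T x0 x1 x2 y0 y1 y2 -> x0 a != 0 -> y0 a = 0 -> y0 b != 0 ->
  forall u v w, dot x0 u = 0 -> dot y0 u = 0 -> tri T u v w = 0.
Proof.
move=> H xa ya yb u v w hu1 hu2.
pose t1 := - (dot x1 v + dot x2 w); pose t2 := - (dot y1 v + dot y2 w).
pose be := t2 / y0 b; pose al := (t1 - be * x0 b) / x0 a.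
pose z := shift (scale al (unitv a)) be (unitv b).
have hz1 : dot x0 z = t1 by rewrite /z dot_shiftr dot_scale !dot_unitv /al; field.
have hz2 : dot y0 z = t2 by rewrite /z dot_shiftr dot_scale !dot_unitv ya /be; field.
apply: (@tri_eq0_of_shift1 _ _ _ _ z) => s s0; apply: H.
  by rewrite dot_shiftr !dot_scale hu1 hz1 /t1; ring.
by rewrite dot_shiftr !dot_scale hu2 hz2 /t2; ring.
Qed.

Lemma vanish_on_u_and_vw T x0 x1 x2 y0 y1 y2 a :
  vanishes_on T x0 x1 x2 y0 y1 y2 -> x0 a != 0 -> (forall i, y0 i = 0) ->
  forall u v w, dot x0 u = 0 -> dot y1 v + dot y2 w = 0 -> tri T u v w = 0.
Proof.
move=> H xa y00 u v w hu hvw.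
pose z := scale (- (dot x1 v + dot x2 w) / x0 a) (unitv a).
have hz : dot x0 z = - (dot x1 v + dot x2 w) by rewrite /z dot_scale dot_unitv; field.
apply: (@tri_eq0_of_shift1 _ _ _ _ z) => s s0; apply: H.
  by rewrite dot_shiftr hz !dot_scale hu; ring.
by rewrite (dot_eq0 _ y00) add0r !dot_scale -mulrDr hvw mulr0.
Qed.

(* Absorbing w into a shift of v: vanishing on ker x0 x {y1.v + y2.w = 0}
   with y1 b != 0 gives vanishing on ker x0 x ker y1. *)
Lemma vanish_on_u_and_v T x0 y1 y2 b :
  (forall u v w, dot x0 u = 0 -> dot y1 v + dot y2 w = 0 -> tri T u v w = 0) ->
  y1 b != 0 -> forall u v w, dot x0 u = 0 -> dot y1 v = 0 -> tri T u v w = 0.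
Proof.
move=> H yb u v w hu hv.
pose z := scale (- dot y2 w / y1 b) (unitv b).
have hz : dot y1 z = - dot y2 w by rewrite /z dot_scale dot_unitv; field.
apply: (@tri_eq0_of_shift2 _ _ _ _ z) => s s0; apply: H => //.
by rewrite dot_shiftr hz !dot_scale hv; ring.
Qed.

(* The main case: x0 has a nonzero entry.  After replacing y by y - c x so that
   y0 vanishes at that entry, one of the three vanishing criteria applies. *)
Lemma decomposable_of_first_nonzero T x0 x1 x2 y0 y1 y2 a :
  vanishes_on T x0 x1 x2 y0 y1 y2 -> x0 a != 0 -> decomposable T.
Proof.
move=> H xa; pose c := y0 a / x0 a.
pose y0' := shift y0 (- c) x0; pose y1' := shift y1 (- c) x1.
pose y2' := shift y2 (- c) x2.
have H' : vanishes_on T x0 x1 x2 y0' y1' y2'.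
  move=> u v w h1; rewrite !dot_shiftl => h2; apply: H => //.
  have -> : dot y0 u + dot y1 v + dot y2 w =
    (dot y0 u + - c * dot x0 u + (dot y1 v + - c * dot x1 v) + (dot y2 w + - c * dot x2 w))
    + c * (dot x0 u + dot x1 v + dot x2 w) by ring.
  by rewrite h2 h1 mulr0 addr0.
have ya : y0' a = 0 by rewrite /y0' /shift /c; field.
have [[b yb]|y00] := vector_cases y0'.
  exact: decomposable_of_vanish_uu (vanish_on_u_kernels H' xa ya yb).
have Huvw := vanish_on_u_and_vw H' xa y00.
have [[b yb]|y10] := vector_cases y1'.
  exact: decomposable_of_vanish_uv (vanish_on_u_and_v Huvw yb).
apply: (@decomposable_of_vanish_uw _ _ _ x0 y2') => u v w hu hw; apply: Huvw => //.
by rewrite (dot_eq0 v y10) hw addr0.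
Qed.

Lemma first_zero_or_decomposable T x0 x1 x2 y0 y1 y2 :
  vanishes_on T x0 x1 x2 y0 y1 y2 ->
  (forall i, x0 i = 0 /\ y0 i = 0) \/ decomposable T.
Proof.
move=> H; have [[a xa]|x00] := vector_cases x0.
  by right; exact: decomposable_of_first_nonzero H xa.
have [[a ya]|y00] := vector_cases y0.
  by right; exact: decomposable_of_first_nonzero (vanishes_on_swap H) ya.
by left.
Qed.

(* Rotate until some
   first component is nonzero; if none is, T vanishes identically. *)
Theorem decomposable_of_vanishing T x0 x1 x2 y0 y1 y2 :
  vanishes_on T x0 x1 x2 y0 y1 y2 -> decomposable T.
Proof.
move=> H; have [/all_and2 [x00 y00]|//] := first_zero_or_decomposable H.
have H1 := vanishes_on_rot H.
have [/all_and2 [x10 y10]|] := first_zero_or_decomposable H1; last exact: decomposable_rot.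
have H2 := vanishes_on_rot H1.
have [/all_and2 [x20 y20]|] := first_zero_or_decomposable H2; last first.
  by move=> /decomposable_rot /decomposable_rot.
have T0 i j k : T i j k = 0.
  rewrite -tri_unitv; apply: H.
    by rewrite !dot_eq0 ?addr0.
  by rewrite !dot_eq0 ?addr0.
exists 0%N, 0%N, (fun _ => 0), (fun _ _ => 0), (fun _ => 0), (fun _ _ => 0).
by split=> // i j k /=; rewrite T0 mul0r addr0.
Qed.

End Decomposition.

Definition idx (i : 'I_4) (p : nat) : 'I_12 := inord (3 * i + p).

Lemma val_idx i p : (p < 3)%N -> (idx i p : nat) = (3 * i + p)%N.
Proof. by move=> hp; rewrite /idx inordK //; have := ltn_ord i; lia. Qed.

Lemma col_idx i p : (p < 3)%N -> col_of (idx i p) = p.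
Proof. by move=> hp; rewrite /col_of val_idx // mulnC modnMDl modn_small. Qed.

Lemma row_idx i p : (p < 3)%N -> inord (idx i p %/ 3) = i.
Proof. by move=> hp; rewrite val_idx // mulnC divnMDl // divn_small // addn0 inord_val. Qed.

Lemma idx_inj i j p q : (p < 3)%N -> (q < 3)%N ->
  (idx i p == idx j q) = (i == j) && (p == q).
Proof.
move=> hp hq; apply/eqP/andP => [e|[/eqP -> /eqP -> //]].
have epq : p = q by rewrite -(col_idx i hp) -(col_idx j hq) e.
by rewrite -(row_idx i hp) -(row_idx j hq) e epq.
Qed.

Lemma col_of_lt (x : 'I_12) : (col_of x < 3)%N.
Proof. by rewrite /col_of ltn_mod. Qed.

Lemma idx_col (x : 'I_12) : x = idx (inord (x %/ 3)) (col_of x).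
Proof.
apply: ord_inj; rewrite val_idx ?col_of_lt // inordK /col_of 1?mulnC -?divn_eq //.
by have := ltn_ord x; lia.
Qed.

Definition mono (i j k : 'I_4) : 'X_{1..12} :=
  (U_(idx i 0) + U_(idx j 1) + U_(idx k 2))%MM.

Lemma coldegD m1 m2 c : coldeg (m1 + m2)%MM c = (coldeg m1 c + coldeg m2 c)%N.
Proof. by rewrite /coldeg -big_split; apply: eq_bigr => k _; rewrite mnmDE. Qed.

Lemma coldegU k c : coldeg U_(k)%MM c = (col_of k == c).
Proof.
rewrite /coldeg; case: eqP => hk.
  rewrite (bigD1 k) ?hk ?eqxx //= mnm1E eqxx big1 // => k' /andP [_ hk'].
  by rewrite mnm1E eq_sym (negbTE hk').
rewrite big1 // => k' /eqP hk'; rewrite mnm1E; case: eqP => // e.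
by rewrite e in hk.
Qed.

Lemma coldeg1P (m : 'X_{1..12}) (c : 'I_3) : coldeg m c = 1%N ->
  exists i : 'I_4, m (idx i c) = 1%N /\
    forall x : 'I_12, col_of x = c -> x != idx i c -> m x = 0%N.
Proof.
rewrite /coldeg => hs.
have [k0 /andP [/eqP hc hk]|m0] := pickP (fun k => (col_of k == c) && (m k != 0%N));
  last by move: hs; rewrite big1 // => k hk; move: (m0 k); rewrite hk => /negbFE /eqP.
move: hs; rewrite (bigD1 k0) ?hc //= => hs.
have hk1 : m k0 = 1%N by move: hk hs; case: (m k0) => [|[|?]] //=; lia.
move: hs; rewrite hk1 => /(congr1 predn) /= /eqP; rewrite sum_nat_eq0 => /forallP hrest.
exists (inord (k0 %/ 3)); rewrite -hc -idx_col; split => // x hx hxk.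
by move: (hrest x); rewrite hx hc eqxx hxk => /eqP.
Qed.

Lemma coldeg111_mono (m : 'X_{1..12}) : (forall c : 'I_3, coldeg m c = 1%N) ->
  exists i j k, m = mono i j k.
Proof.
move=> h.
have [i [hi1 hi0]] := coldeg1P (h (@Ordinal 3 0 isT)).
have [j [hj1 hj0]] := coldeg1P (h (@Ordinal 3 1 isT)).
have [k [hk1 hk0]] := coldeg1P (h (@Ordinal 3 2 isT)).
exists i, j, k; apply/mnmP => x; rewrite /mono !mnmDE !mnm1E.
have other p y : (p < 3)%N -> col_of x != p -> (idx y p == x) = false.
  by move=> hp hx; apply: contraNF hx => /eqP <-; rewrite col_idx.
move: (col_of_lt x) (hi0 x) (hj0 x) (hk0 x).
case hcx : (col_of x) => [|[|[|?]]] // _ /= h0 h1 h2.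
- rewrite (other 1%N j) ?hcx // (other 2%N k) ?hcx //= !addn0.
  by case: eqP => [<- //|/eqP]; rewrite eq_sym => /(h0 erefl).
- rewrite (other 0%N i) ?hcx // (other 2%N k) ?hcx //= addn0.
  by case: eqP => [<- //|/eqP]; rewrite eq_sym => /(h1 erefl).
- rewrite (other 0%N i) ?hcx // (other 1%N j) ?hcx //=.
  by case: eqP => [<- //|/eqP]; rewrite eq_sym => /(h2 erefl).
Qed.

Lemma mono_eq i j k i0 j0 k0 :
  (mono i j k == mono i0 j0 k0) = [&& i == i0, j == j0 & k == k0].
Proof.
apply/eqP/idP => [e|/and3P [/eqP -> /eqP -> /eqP ->] //].
have h0 := congr1 (fun m : 'X_{1..12} => m (idx i0 0)) e.
have h1 := congr1 (fun m : 'X_{1..12} => m (idx j0 1)) e.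
have h2 := congr1 (fun m : 'X_{1..12} => m (idx k0 2)) e.
rewrite /mono /= !mnmDE !mnm1E !idx_inj //= !eqxx /= !andbF !andbT in h0 h1 h2.
move: h0 h1 h2; rewrite !addn0 ?add0n.
by case: (i == i0); case: (j == j0); case: (k == k0).
Qed.

Lemma sum_by_rows (V : nmodType) (G : 'I_12 -> V) :
  \sum_k G k = \sum_(i < 4) (G (idx i 0) + G (idx i 1) + G (idx i 2)).
Proof.
have sum3 (H : nat -> V) m :
    \sum_(0 <= k < 3 * m) H k = \sum_(0 <= i < m) (H (3 * i)%N + H (3 * i).+1 + H (3 * i).+2).
  elim: m => [|m IH]; first by rewrite muln0 !big_nil.
  by rewrite mulnS !addSn add0n !big_nat_recr //= IH ?addrA //; lia.
have -> : \sum_k G k = \sum_(0 <= k < 3 * 4) G (inord k).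
  by rewrite big_mkord; apply: eq_bigr => k _; rewrite inord_val.
rewrite sum3 big_mkord.
by apply: eq_bigr => i _; rewrite /idx addn0 addn1 addn2.
Qed.

Section Polynomials.
Variable R : realType.
Local Notation F := (R[i]).
Implicit Types (T : 'I_4 -> 'I_4 -> 'I_4 -> F) (u v w : 'I_4 -> F).

Definition poly_of_tri T : S R := \sum_i \sum_j \sum_k T i j k *: 'X_[mono i j k].

Definition other1 (p : nat) : nat := if p == 0%N then 1%N else 0%N.
Definition other2 (p : nat) : nat := if p == 2%N then 1%N else 2%N.

Definition linear_col (p : nat) (f : 'I_4 -> F) : S R :=
  \sum_i f i *: 'X_[U_(idx i p)].
Definition quadratic_col (p : nat) (g : 'I_4 -> 'I_4 -> F) : S R :=
  \sum_i \sum_j g i j *: 'X_[U_(idx i (other1 p)) + U_(idx j (other2 p))].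

Lemma poly_of_tri_ext T T' : (forall i j k, T i j k = T' i j k) ->
  poly_of_tri T = poly_of_tri T'.
Proof.
move=> h; apply: eq_bigr => i _; apply: eq_bigr => j _; apply: eq_bigr => k _.
by rewrite h.
Qed.

Lemma poly_of_triD T T' :
  poly_of_tri (fun i j k => T i j k + T' i j k) = poly_of_tri T + poly_of_tri T'.
Proof.
rewrite /poly_of_tri -big_split; apply: eq_bigr => i _; rewrite -big_split.
apply: eq_bigr => j _; rewrite -big_split; apply: eq_bigr => k _.
by rewrite scalerDl.
Qed.

Lemma linear_mul_quadratic p f g : (p < 3)%N ->
  linear_col p f * quadratic_col p g = poly_of_tri (slot p f g).
Proof.
have prodZX (c d : F) m1 m2 :
    (c *: 'X_[m1]) * (d *: 'X_[m2]) = (c * d) *: ('X_[(m1 + m2)%MM] : S R).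
  by rewrite -scalerAl -scalerAr scalerA mpolyXD.
have expand (A : 'I_4 -> S R) (B : 'I_4 -> 'I_4 -> S R) :
    (\sum_i A i) * (\sum_j \sum_k B j k) = \sum_i \sum_j \sum_k A i * B j k.
  rewrite mulr_suml; apply: eq_bigr => i _; rewrite mulr_sumr.
  by apply: eq_bigr => j _; rewrite mulr_sumr.
case: p => [|[|[|p]]] // _.
all: rewrite /linear_col /quadratic_col /poly_of_tri /other1 /other2 /= expand.
- apply: eq_bigr => i _; apply: eq_bigr => j _; apply: eq_bigr => k _.
  by rewrite prodZX /mono addmA.
- rewrite exchange_big; apply: eq_bigr => i _; apply: eq_bigr => j _.
  apply: eq_bigr => k _; rewrite prodZX /mono; congr (_ *: 'X_[_]).
  by apply/mnmP => x; rewrite !mnmDE; lia.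
- rewrite exchange_big; apply: eq_bigr => i _.
  rewrite exchange_big; apply: eq_bigr => j _; apply: eq_bigr => k _.
  rewrite prodZX /mono; congr (_ *: 'X_[_]).
  by apply/mnmP => x; rewrite !mnmDE; lia.
Qed.

Lemma msupp_sumP (I : finType) (G : I -> S R) (P : 'X_{1..12} -> Prop) :
  (forall x m, m \in msupp (G x) -> P m) -> forall m, m \in msupp (\sum_x G x) -> P m.
Proof. by move=> h m /msupp_sum_le /flattenP [s /mapP [x _ ->]]; exact: h. Qed.

Lemma msuppZXP (c : F) m0 (P : 'X_{1..12} -> Prop) :
  P m0 -> forall m, m \in msupp (c *: ('X_[m0] : S R)) -> P m.
Proof. by move=> h m /msuppZ_le; rewrite msuppX inE => /eqP ->. Qed.

Lemma linear_col_colhomog p f : (p < 3)%N -> colhomog (linear_col p f).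
Proof.
move=> hp; exists (fun c : 'I_3 => nat_of_bool (p == c)).
by apply: msupp_sumP => i; apply: msuppZXP => c; rewrite coldegU col_idx.
Qed.

Lemma linear_col_homog p f : linear_col p f \is 1.-homog.
Proof.
apply/dhomogP; apply: (msupp_sumP (P := fun m => mdeg m = 1%N)) => i.
by apply: msuppZXP; exact: mdeg1.
Qed.

Lemma quadratic_col_colhomog p g : colhomog (quadratic_col p g).
Proof.
have o1 : (other1 p < 3)%N by rewrite /other1; case: eqP.
have o2 : (other2 p < 3)%N by rewrite /other2; case: eqP.
exists (fun c : 'I_3 => (nat_of_bool (other1 p == c) + nat_of_bool (other2 p == c))%N).
apply: msupp_sumP => i; apply: msupp_sumP => j; apply: msuppZXP => c.
by rewrite coldegD !coldegU !col_idx.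
Qed.

Lemma quadratic_col_homog p g : quadratic_col p g \is 2.-homog.
Proof.
apply/dhomogP; apply: (msupp_sumP (P := fun m => mdeg m = 2%N)) => i.
by apply: msupp_sumP => j; apply: msuppZXP; rewrite mdegD !mdeg1.
Qed.

Lemma poly_of_tri_coef T m : (poly_of_tri T)@_m =
  \sum_i \sum_j \sum_k T i j k * (mono i j k == m)%:R.
Proof.
rewrite /poly_of_tri (big_morph _ (mcoeffD m) (mcoeff0 _ m)); apply: eq_bigr => i _.
rewrite (big_morph _ (mcoeffD m) (mcoeff0 _ m)); apply: eq_bigr => j _; rewrite (big_morph _ (mcoeffD m) (mcoeff0 _ m)); apply: eq_bigr => k _.
by rewrite mcoeffZ mcoeffX.
Qed.

Lemma sum_delta3 (G : 'I_4 -> 'I_4 -> 'I_4 -> F) i0 j0 k0 :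
  \sum_i \sum_j \sum_k G i j k * ([&& i == i0, j == j0 & k == k0])%:R = G i0 j0 k0.
Proof.
rewrite (bigD1 i0) //= [X in _ + X]big1 ?addr0 => [|i /negbTE hi]; last first.
  by apply: big1 => j _; apply: big1 => k _; rewrite hi mulr0.
rewrite eqxx (bigD1 j0) //= [X in _ + X]big1 ?addr0 => [|j /negbTE hj]; last first.
  by apply: big1 => k _; rewrite hj mulr0.
by rewrite eqxx /= sum_delta.
Qed.

Lemma colhomog111_poly_of_tri (D : S R) : colhomog_of deg111 D ->
  D = poly_of_tri (fun i j k => D@_(mono i j k)).
Proof.
move=> hD; apply/mpolyP => m; rewrite poly_of_tri_coef.
have [hm|hm] := boolP (m \in msupp D); last first.
  rewrite (memN_msupp_eq0 hm) big1 // => i _; rewrite big1 // => j _; rewrite big1 // => k _.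
  by case: eqP => [e|]; [rewrite e (memN_msupp_eq0 hm) mul0r | rewrite mulr0].
have [i0 [j0 [k0 ->]]] := coldeg111_mono (hD m hm).
rewrite -(sum_delta3 (fun i j k => D@_(mono i j k)) i0 j0 k0).
apply: eq_bigr => i _; apply: eq_bigr => j _; apply: eq_bigr => k _.
by rewrite mono_eq.
Qed.

Lemma dhomog1_linear (a : S R) : a \is 1.-homog ->
  a = \sum_(k < 12) a@_U_(k) *: 'X_[U_(k)].
Proof.
move=> ha; apply/mpolyP => m; rewrite (big_morph _ (mcoeffD m) (mcoeff0 _ m)).
under eq_bigr => k _ do rewrite mcoeffZ mcoeffX.
have [hm|hm] := boolP (m \in msupp a).
  move: (dhomogP _ _ _ ha m hm) => /eqP /mdeg1P [k0 /eqP ->].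
  by under eq_bigr => k _ do rewrite eq_mnm1; rewrite sum_delta.
rewrite (memN_msupp_eq0 hm) big1 // => k _.
by case: eqP => [e|]; [rewrite e (memN_msupp_eq0 hm) mul0r | rewrite mulr0].
Qed.

Definition colpoint u v w : 'I_12 -> F := fun k =>
  let r := inord (k %/ 3) in
  if col_of k == 0%N then u r else if col_of k == 1%N then v r else w r.

Lemma colpoint0 u v w i : colpoint u v w (idx i 0) = u i.
Proof. by rewrite /colpoint col_idx // row_idx. Qed.
Lemma colpoint1 u v w i : colpoint u v w (idx i 1) = v i.
Proof. by rewrite /colpoint col_idx // row_idx. Qed.
Lemma colpoint2 u v w i : colpoint u v w (idx i 2) = w i.
Proof. by rewrite /colpoint col_idx // row_idx. Qed.

Lemma eval_poly_of_tri T u v w : (poly_of_tri T).@[colpoint u v w] = tri T u v w.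
Proof.
rewrite /poly_of_tri /tri (big_morph _ (mevalD _) (meval0 _)); apply: eq_bigr => i _.
rewrite (big_morph _ (mevalD _) (meval0 _)); apply: eq_bigr => j _; rewrite (big_morph _ (mevalD _) (meval0 _)); apply: eq_bigr => k _.
by rewrite mevalZ /mono !mpolyXD !mevalM !mevalXU colpoint0 colpoint1 colpoint2 !mulrA.
Qed.

Lemma eval_linear (a : S R) u v w : a \is 1.-homog ->
  a.@[colpoint u v w] = dot (fun i => a@_U_(idx i 0)) u
    + dot (fun i => a@_U_(idx i 1)) v + dot (fun i => a@_U_(idx i 2)) w.
Proof.
move=> ha; rewrite {1}(dhomog1_linear ha) (big_morph _ (mevalD _) (meval0 _)) sum_by_rows /dot -!big_split.
apply: eq_bigr => i _.
by rewrite !mevalZ !mevalXU colpoint0 colpoint1 colpoint2.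
Qed.

End Polynomials.

Theorem lemma7p3 (R : realType) (Delta a b c d : S R) :
  colhomog_of deg111 Delta ->
  a \is 1.-homog -> c \is 1.-homog ->
  b \is 2.-homog -> d \is 2.-homog ->
  Delta = a * b + c * d ->
  exists a' b' c' d' : S R,
    [/\ colhomog a', colhomog b', colhomog c' & colhomog d'] /\
    [/\ a' \is 1.-homog, c' \is 1.-homog, b' \is 2.-homog & d' \is 2.-homog] /\
    Delta = a' * b' + c' * d'.
Proof.
move=> hD ha hc _ _ hE.
pose T i j k := Delta@_(mono i j k).
have eD : Delta = poly_of_tri T := colhomog111_poly_of_tri hD.
have hT : vanishes_on T
    (fun i => a@_U_(idx i 0)) (fun i => a@_U_(idx i 1)) (fun i => a@_U_(idx i 2))
    (fun i => c@_U_(idx i 0)) (fun i => c@_U_(idx i 1)) (fun i => c@_U_(idx i 2)).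
  move=> u v w a0 c0; rewrite -eval_poly_of_tri -eD hE mevalD !mevalM.
  by rewrite (eval_linear _ _ _ ha) (eval_linear _ _ _ hc) a0 c0 !mul0r addr0.
have two_neq0 : (2 : R[i]) != 0 by rewrite pnatr_eq0.
have [p [q [f [g [f' [g' [hp hq eT]]]]]]] := decomposable_of_vanishing two_neq0 hT.
exists (linear_col p f), (quadratic_col p g), (linear_col q f'), (quadratic_col q g').
split; first by split; exact: linear_col_colhomog || exact: quadratic_col_colhomog.
split; first by split; exact: linear_col_homog || exact: quadratic_col_homog.
by rewrite eD (poly_of_tri_ext eT) poly_of_triD !linear_mul_quadratic.
Qed.
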